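(* Let $(A,\Delta)$ be an algebraic quantum hypergroup. If $A$ has an identity $1$, then $\Delta(1)=1\otimes1$.
   Context: **Standing definitions.** All algebras are over $\mathbb C$, associative, possibly without identity, with non-degenerate product. $M(A)$ denotes the multiplier algebra and $\iota$ the identity map. *Comultiplication.* A regular comultiplication is a linear map $\Delta:A\to M(A\otimes A)$, not assumed multiplicative, such that: - $\Delta(a)(1\otimes b)$, $(a\otimes1)\Delta(b)$, $\Delta(a)(b\otimes1)$ and $(1\otimes a)\Delta(b)$ lie in $A\otimes A$; - $(a\otimes1\otimes1)(\Delta\otimes\iota)(\Delta(b)(1\otimes c))=(\iota\otimes\Delta)((a\otimes1)\Delta(b))(1\otimes1\otimes c)$. *Counit.* A counit is a homomorphism $\varepsilon:A\to\mathbb C$ with $(\varepsilon\otimes\iota)\Delta=\iota=(\iota\otimes\varepsilon)\Delta$. *Integrals.* A left integral is a nonzero $\varphi$ with $(\iota\otimes\varphi)\Delta(a)=\varphi(a)1$ in $M(A)$. A functional is faithful if $f(ab)=0\ \forall b$ or $f(ba)=0\ \forall b$ forces $a=0$. *Antipode.* An antipode relative to a faithful left integral $\varphi$ is a bijective linear anti-homomorphism $S:A\to A$ with $S((\iota\otimes\varphi)(\Delta(a)(1\otimes b)))=(\iota\otimes\varphi)((1\otimes a)\Delta(b))$ for all $a,b$. *Algebraic quantum hypergroup.* A pair $(A,\Delta)$ with $\Delta$ a regular comultiplication admitting a counit, a faithful left integral $\varphi$ and an antipode relative to $\varphi$. *)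

From HB Require Import structures.
From mathcomp Require Import all_boot all_algebra complex.
From mathcomp Require Import reals.
Set Implicit Arguments. Unset Strict Implicit. Unset Printing Implicit Defensive.
Import GRing.Theory.
Local Open Scope ring_scope.

Section AQH.
Variable R : realType.
Local Notation C := (R[i]).
Variable A : algType C.

(* Elements of A (x) A are represented by finite lists of elementary
   tensors  [:: (a1,b1); ...; (an,bn)]  standing for  sum_i a_i (x) b_i;
   elements of A (x) A (x) A by lists of triples ((a,b),c). *)
Definition tens2 := seq (A * A).
Definition tens3 := seq (A * A * A).

(* Two tensors are equal in A (x) A iff all functionals f (x) g agree on them
   (the canonical map A (x) A -> Bil(dual A, dual A) is injective). *)
Definition tev2 (f g : A -> C) (s : tens2) : C :=
  \sum_(p <- s) f p.1 * g p.2.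
Definition teq2 (s t : tens2) : Prop :=
  forall f g : {scalar A}, tev2 f g s = tev2 f g t.

Definition tev3 (f g h : A -> C) (s : tens3) : C :=
  \sum_(p <- s) f p.1.1 * g p.1.2 * h p.2.
Definition teq3 (s t : tens3) : Prop :=
  forall f g h : {scalar A}, tev3 f g h s = tev3 f g h t.

Definition tmul2 (s t : tens2) : tens2 :=
  [seq (p.1 * q.1, p.2 * q.2) | p <- s, q <- t].
Definition tmul3 (s t : tens3) : tens3 :=
  [seq ((p.1.1 * q.1.1, p.1.2 * q.1.2), p.2 * q.2) | p <- s, q <- t].
Definition tscale2 (c : C) (s : tens2) : tens2 :=
  [seq (c *: p.1, p.2) | p <- s].

Definition comul_l (D : A -> tens2) (s : tens2) : tens3 :=
  flatten [seq [seq ((q.1, q.2), p.2) | q <- D p.1] | p <- s].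
Definition comul_r (D : A -> tens2) (s : tens2) : tens3 :=
  flatten [seq [seq ((p.1, q.1), q.2) | q <- D p.2] | p <- s].

Definition slice_r (f : A -> C) (s : tens2) : A := \sum_(p <- s) f p.2 *: p.1.
Definition slice_l (f : A -> C) (s : tens2) : A := \sum_(p <- s) f p.1 *: p.2.

(* Regular comultiplication (A unital, so M(A (x) A) = A (x) A and the
   four "lies in A (x) A" conditions are automatic). *)
Definition regular_comultiplication (D : A -> tens2) : Prop :=
  (forall (c : C) (a b : A), teq2 (D (c *: a + b)) (tscale2 c (D a) ++ D b)) /\
  (forall a b c : A,
     teq3 (tmul3 [:: ((a, 1), 1)] (comul_l D (tmul2 (D b) [:: (1, c)])))
          (tmul3 (comul_r D (tmul2 [:: (a, 1)] (D b))) [:: ((1, 1), c)])).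

Definition is_counit (D : A -> tens2) (eps : {scalar A}) : Prop :=
  (forall a b : A, eps (a * b) = eps a * eps b) /\
  (forall a : A, slice_l eps (D a) = a) /\
  (forall a : A, slice_r eps (D a) = a).

Definition is_left_integral (D : A -> tens2) (phi : {scalar A}) : Prop :=
  (exists a : A, phi a != 0) /\
  (forall a : A, slice_r phi (D a) = phi a *: 1).

Definition faithful_functional (phi : {scalar A}) : Prop :=
  (forall a : A, (forall b : A, phi (a * b) = 0) -> a = 0) /\
  (forall a : A, (forall b : A, phi (b * a) = 0) -> a = 0).

Definition is_antipode (D : A -> tens2) (phi : {scalar A}) (S : {linear A -> A})
  : Prop :=
  bijective S /\
  (forall a b : A, S (a * b) = S b * S a) /\
  (forall a b : A,
     S (slice_r phi (tmul2 (D a) [:: (1, b)])) =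
     slice_r phi (tmul2 [:: (1, a)] (D b))).

Definition algebraic_quantum_hypergroup (D : A -> tens2) : Prop :=
  regular_comultiplication D /\
  (exists eps : {scalar A}, is_counit D eps) /\
  (exists phi : {scalar A},
     is_left_integral D phi /\ faithful_functional phi /\
     exists S : {linear A -> A}, is_antipode D phi S).

End AQH.

(* Slicing the antipode identity with b arbitrary and a = 1 gives
   S((id (x) phi)(Delta(1)(1 (x) b))) = (id (x) phi)(Delta b) = phi(b) 1, and since
   S fixes 1 this says (id (x) phi)(Delta(1)(1 (x) b)) = phi(b) 1.  Applying a
   functional f turns this into phi(((f (x) id) Delta(1) - f(1) 1) b) = 0 for all b,
   so faithfulness of phi gives (f (x) id) Delta(1) = f(1) 1, and a second
   functional g yields (f (x) g) Delta(1) = f(1) g(1). *)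
From mathcomp Require Import all_boot all_algebra complex.
From mathcomp Require Import reals.
Set Implicit Arguments. Unset Strict Implicit. Unset Printing Implicit Defensive.
Import GRing.Theory.
Local Open Scope ring_scope.

Lemma surj_antimorph1 (B : nzRingType) (S : B -> B) :
  (exists x, S x = 1) -> (forall a b, S (a * b) = S b * S a) -> S 1 = 1.
Proof. by move=> [x Sx] Smul; have := Smul x 1; rewrite mulr1 Sx mulr1. Qed.

Section Slices.
Variables (R : realType) (A : algType R[i]).
Implicit Types (s : tens2 A) (f g phi : {scalar A}).

Lemma tmul2_1l s : tmul2 [:: (1, 1)] s = s.
Proof.
rewrite /tmul2 /= cats0 -[RHS]map_id; apply: eq_map => -[a b] /=.
by rewrite !mul1r.
Qed.

Lemma slice_l_tev2 f g s : g (slice_l f s) = tev2 f g s.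
Proof.
rewrite /slice_l /tev2 linear_sum; apply: eq_bigr => p _.
by rewrite linearZ.
Qed.

Lemma slice_r_tmul2_scalar f phi s b :
  f (slice_r phi (tmul2 s [:: (1, b)])) = phi (slice_l f s * b).
Proof.
rewrite /slice_r /slice_l /tmul2 flatten_map1 big_map mulr_suml !linear_sum.
apply: eq_bigr => p _ /=.
by rewrite mulr1 -scalerAl !linearZ /= mulrC.
Qed.

Lemma faithful_mulr_inj phi x y : faithful_functional phi ->
  (forall b, phi (x * b) = phi (y * b)) -> x = y.
Proof.
move=> [faithful _] eq_phi; apply/eqP; rewrite -subr_eq0; apply/eqP.
by apply: faithful => b; rewrite mulrBl linearB /= eq_phi subrr.
Qed.

End Slices.

Section UnitComultiplication.
Variables (R : realType) (A : algType R[i]) (D : A -> tens2 A).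
Variables (phi : {scalar A}) (S : {linear A -> A}).
Hypotheses (phi_int : is_left_integral D phi) (S_antipode : is_antipode D phi S).

Lemma antipode1 : S 1 = 1.
Proof.
have [[Sinv _ SinvK] [Smul _]] := S_antipode.
by apply: surj_antimorph1 Smul; exists (Sinv 1); rewrite SinvK.
Qed.

Lemma integral_slice_comul1 b :
  slice_r phi (tmul2 (D 1) [:: (1, b)]) = phi b *: 1.
Proof.
have [[Sinv SK _] [_ Santi]] := S_antipode.
apply: (can_inj SK).
by rewrite Santi tmul2_1l phi_int.2 linearZ /= antipode1.
Qed.

Lemma slice_l_comul1 (f : {scalar A}) : faithful_functional phi ->
  slice_l f (D 1) = f 1 *: 1.
Proof.
move=> phi_faithful; apply: (faithful_mulr_inj phi_faithful) => b.
rewrite -slice_r_tmul2_scalar integral_slice_comul1 -scalerAl mul1r.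
by rewrite !linearZ /= mulrC.
Qed.

End UnitComultiplication.

Theorem lemma1p12 (R : realType) (A : algType R[i]) (D : A -> tens2 A) :
  algebraic_quantum_hypergroup D -> teq2 (D 1) [:: (1, 1)].
Proof.
move=> [_ [_ [phi [phi_int [phi_faithful [S S_antipode]]]]]] f g.
rewrite -slice_l_tev2 (slice_l_comul1 phi_int S_antipode _ phi_faithful).
by rewrite linearZ /tev2 big_seq1.
Qed.
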